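(* Let $T$ be a complete $L$-theory, $\phi(x,y)$ an $L$-formula and $\mathcal U$ the monster model of $T$. Identify $\phi(a,b)$ with $1$ if it holds and $0$ otherwise. Then the following are equivalent: (i) $\phi$ has NIP for $T$; (ii) for every sequence $(a_i:i<\omega)$ in $\mathcal U$ there is a subsequence $(a_{j_i}:i<\omega)$ such that for every $b\in\mathcal U$ the sequence of truth values $(\phi(a_{j_i},b):i<\omega)$ is eventually constant; (iii) for every sequence $(a_i:i<\omega)$ in $\mathcal U$ there are a subsequence $(a_{j_i}:i<\omega)$ and a natural number $N$ such that $\sum_{i=1}^\infty|\phi(a_{j_i},b)-\phi(a_{j_{i+1}},b)|\le N$ for every $b\in\mathcal U$; (iv) for every sequence $(a_i:i<\omega)$ in $\mathcal U$ there is a subsequence $(a_{j_i}:i<\omega)$ such that the sequence of functions $\phi(a_{j_i},y)$ converges pointwise to a function $f$ which is a difference of bounded semi-continuous functions.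
   Context: $\phi(x,y)$ has NIP for $T$ if there is no sequence $(a_i:i<\omega)$ in $\mathcal U$ such that for every $S\subseteq\omega$ some $b$ satisfies $\phi(a_i,b)\iff i\in S$. For a countable set $A$ of tuples, $\tilde\phi(y,x)=\phi(x,y)$ and $S_{\tilde\phi}(A)$ is the (compact, metrizable) Stone space of complete $\tilde\phi$-types over $A$, i.e. ultrafilters of the Boolean algebra generated by the formulas $\phi(a,y)$, $a\in A$; each $a\in A$ gives a continuous function $\phi(a,y):S_{\tilde\phi}(A)\to\{0,1\}$, $q\mapsto 1$ iff $\phi(a,y)\in q$. In (iv) the functions are regarded on $S_{\tilde\phi}(\{a_{j_i}:i<\omega\})$. A function is DBSC if it equals $F_1-F_2$ with $F_1,F_2$ bounded semi-continuous (upper or lower semi-continuous) functions. *)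

From HB Require Import structures.
From mathcomp Require Import all_boot all_order all_algebra.
From mathcomp Require Import all_classical all_reals all_analysis.

Set Implicit Arguments.
Unset Strict Implicit.
Unset Printing Implicit Defensive.

Import Order.TTheory GRing.Theory Num.Theory.

Record signature := Signature {
  fsym : Type;
  far  : fsym -> nat;
  rsym : Type;
  rar  : rsym -> nat }.

Section FOL.
Variable L : signature.

Inductive term : Type :=
| Tvar (k : nat)
| Tapp (f : fsym L) (args : 'I_(far f) -> term).

Inductive formula : Type :=
| Feq (t1 t2 : term)
| Frel (r : rsym L) (args : 'I_(rar r) -> term)
| Fnot (p : formula)
| Fand (p q : formula)
| Fex (k : nat) (p : formula).

Fixpoint tfree (k : nat) (t : term) : Prop :=
  match t with
  | Tvar j => j = k
  | Tapp f args => exists i, tfree k (args i)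
  end.

Fixpoint ffree (k : nat) (p : formula) : Prop :=
  match p with
  | Feq t1 t2 => tfree k t1 \/ tfree k t2
  | Frel r args => exists i, tfree k (args i)
  | Fnot q => ffree k q
  | Fand q1 q2 => ffree k q1 \/ ffree k q2
  | Fex j q => j <> k /\ ffree k q
  end.

Definition sentence (p : formula) : Prop := forall k, ~ ffree k p.

Record structure := Structure {
  dom :> Type;
  dom_pt : dom;
  fint : forall f : fsym L, ('I_(far f) -> dom) -> dom;
  rint : forall r : rsym L, ('I_(rar r) -> dom) -> Prop }.

Section Semantics.
Variable M : structure.

Fixpoint teval (rho : nat -> M) (t : term) : M :=
  match t with
  | Tvar k => rho k
  | Tapp f args => @fint M f (fun i => teval rho (args i))
  end.

Definition upd (rho : nat -> M) (k : nat) (m : M) : nat -> M :=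
  fun j => if j == k then m else rho j.

Fixpoint sat (rho : nat -> M) (p : formula) : Prop :=
  match p with
  | Feq t1 t2 => teval rho t1 = teval rho t2
  | Frel r args => @rint M r (fun i => teval rho (args i))
  | Fnot q => ~ sat rho q
  | Fand q1 q2 => sat rho q1 /\ sat rho q2
  | Fex k q => exists m : M, sat (upd rho k m) q
  end.

Definition holds (p : formula) : Prop := sat (fun _ => dom_pt M) p.

End Semantics.

Definition theory := formula -> Prop.

Definition is_theory (T : theory) : Prop := forall p, T p -> sentence p.

Definition is_model (M : structure) (T : theory) : Prop :=
  forall p, T p -> holds M p.

Definition complete_theory (T : theory) : Prop :=
  (exists M : structure, is_model M T) /\
  forall M N : structure, is_model M T -> is_model N T ->
    forall p, sentence p -> (holds M p <-> holds N p).

(* aleph_1-saturation: every finitely satisfiable countable set of formulas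
   (in the free variables x_0,...,x_{k-1}) with parameters from M (any
   countable set of parameters being assigned, via rho, to the other
   variables) is realized in M. *)
Definition aleph1_saturated (M : structure) : Prop :=
  forall (k : nat) (rho : nat -> M) (Sigma : nat -> formula),
    (forall N : nat, exists c : nat -> M,
        forall j, (j < N)%N ->
          sat (fun i => if (i < k)%N then c i else rho i) (Sigma j)) ->
    exists c : nat -> M,
      forall j, sat (fun i => if (i < k)%N then c i else rho i) (Sigma j).

(* phi(x, y) with x = (x_0,...,x_{n-1}), y = (x_n,...,x_{n+m-1}) *)
Definition formula_in (n m : nat) (phi : formula) : Prop :=
  forall k, ffree k phi -> (k < n + m)%N.

Definition env2 (M : structure) (n m : nat) (a : 'I_n -> M) (b : 'I_m -> M)
  : nat -> M :=
  fun i => if (insub i : option 'I_n) is Some i' then a i'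
           else if (insub (i - n)%N : option 'I_m) is Some i'' then b i''
           else dom_pt M.

Definition satxy (M : structure) (n m : nat) (phi : formula)
  (a : 'I_n -> M) (b : 'I_m -> M) : Prop :=
  sat (env2 a b) phi.

End FOL.

Arguments Tvar {L}.

Section Defs2.
Variables (L : signature) (M : structure L) (n m : nat) (phi : formula L).

Definition NIP : Prop :=
  ~ exists a : nat -> ('I_n -> M),
      forall S : set nat, exists b : 'I_m -> M,
        forall i, satxy phi (a i) b <-> S i.

Definition tv (R : realType) (a : 'I_n -> M) (b : 'I_m -> M) : R :=
  (if `[< satxy phi a b >] then 1 else 0)%R.

(* Stone space S_{phi~}(A), A = {a_k : k < omega}: a complete phi~-type q
   over A is identified with its characteristic function k |-> [phi(a_k,y) \in q]
   in the Cantor space nat -> bool (product topology); the consistent ones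
   are those all of whose finite parts are satisfiable in M. *)
Definition phi_types (a : nat -> ('I_n -> M)) : set (nat -> bool) :=
  [set q | forall N : nat, exists b : 'I_m -> M,
      forall k, (k < N)%N -> (satxy phi (a k) b <-> q k)].

End Defs2.

Definition stone_space (A : set (nat -> bool)) : topologicalType :=
  subspace (A : set cantor_space).

Definition lsc {X : topologicalType} {R : realType} (F : X -> R) : Prop :=
  lower_semicontinuous (fun x => (F x)%:E).
Definition usc {X : topologicalType} {R : realType} (F : X -> R) : Prop :=
  lower_semicontinuous (fun x => (- F x)%:E).

Definition bounded_semicontinuous {X : topologicalType} {R : realType}
  (F : X -> R) : Prop :=
  (exists B : R, forall x, `|F x| <= B)%R /\ (lsc F \/ usc F).

Definition DBSC {X : topologicalType} {R : realType} (f : X -> R) : Prop :=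
  exists F1 F2 : X -> R, bounded_semicontinuous F1 /\
    bounded_semicontinuous F2 /\ forall x, f x = (F1 x - F2 x)%R.

(** If phi shatters (a_i), then along any subsequence some b realises the
   alternating pattern, so the truth values phi(a_(j_i), b) neither stabilise
   nor converge: each of (ii)-(iv) implies NIP.  Conversely, under NIP the
   aleph_1-saturation of U bounds the size K of the finite sets shattered by
   phi (the finite shattered sets are built into an infinite one by realising
   one parameter at a time).  Colouring subsequences by whether some b
   realises the alternating pattern on their first 2K terms, Ramsey's theorem
   gives a homogeneous subsequence; it cannot be positively homogeneous (an
   interleaving argument would shatter K terms), so along it every b has fewer
   than 2K alternations.  Bounded alternation gives (ii) and (iii), and for
   (iv) the limit of a type q is q_0 + #ascents(q) - #descents(q), a
   difference of two bounded lower semicontinuous functions (capped suprema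
   of counts that depend on finite prefixes of q). *)

From HB Require Import structures.
From mathcomp Require Import all_boot all_order all_algebra.
From mathcomp Require Import all_classical all_reals all_analysis.
From mathcomp Require Import zify lra.

Import Order.TTheory GRing.Theory Num.Theory.
Import numFieldNormedType.Exports.
Local Open Scope classical_set_scope.
Local Open Scope ring_scope.

Set Implicit Arguments.
Unset Strict Implicit.
Unset Printing Implicit Defensive.

(** * First-order syntax and variable layout *)

Section Syntax.
Variables (L : signature) (M : structure L).
Local Open Scope nat_scope.

Fixpoint trename (s : nat -> nat) (t : term L) : term L :=
  match t with
  | Tvar k => Tvar (s k)
  | Tapp f args => Tapp (fun i => trename s (args i))
  end.

Fixpoint frename (s : nat -> nat) (p : formula L) : formula L :=
  match p with
  | Feq t1 t2 => Feq (trename s t1) (trename s t2)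
  | Frel r args => Frel (fun i => trename s (args i))
  | Fnot q => Fnot (frename s q)
  | Fand q1 q2 => Fand (frename s q1) (frename s q2)
  | Fex k q => Fex (s k) (frename s q)
  end.

Lemma teval_rename (rho : nat -> M) s t :
  teval rho (trename s t) = teval (rho \o s) t.
Proof.
elim: t => [k|f args IH] //=.
by congr (fint _); apply: funext => i; apply: IH.
Qed.

Lemma sat_rename s (rho : nat -> M) p : injective s ->
  sat rho (frename s p) <-> sat (rho \o s) p.
Proof.
move=> s_inj; elim: p rho => [t1 t2|r args|q IH|q1 IH1 q2 IH2|k q IH] rho /=.
- by rewrite !teval_rename.
- by under eq_fun => i do rewrite teval_rename.
- by rewrite IH.
- by rewrite IH1 IH2.
- have upd_rename x : upd rho (s k) x \o s = upd (rho \o s) k x.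
    by apply: funext => j; rewrite /upd /= (inj_eq s_inj).
  by split=> -[x Hx]; exists x; [rewrite -upd_rename -IH | rewrite IH upd_rename].
Qed.

Lemma teval_ext (rho rho' : nat -> M) t :
  (forall k, tfree k t -> rho k = rho' k) -> teval rho t = teval rho' t.
Proof.
elim: t => [k|f args IH] /= H; first exact: H.
by congr (fint _); apply: funext => i; apply: IH => k Hk; apply: H; exists i.
Qed.

Lemma sat_ext (rho rho' : nat -> M) p :
  (forall k, ffree k p -> rho k = rho' k) -> (sat rho p <-> sat rho' p).
Proof.
elim: p rho rho' => [t1 t2|r args|q IH|q1 IH1 q2 IH2|k q IH] rho rho' /= H.
- by rewrite (@teval_ext rho rho' t1) ?(@teval_ext rho rho' t2) // => k Hk;
    apply: H; [right|left].
- suff -> : (fun i => teval rho (args i)) = (fun i => teval rho' (args i)) by [].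
  by apply: funext => i; apply: teval_ext => k Hk; apply: H; exists i.
- by rewrite (IH rho rho').
- by rewrite (IH1 rho rho') ?(IH2 rho rho') // => k Hk; apply: H; [right|left].
- have upd_ext x : forall j, ffree j q -> upd rho k x j = upd rho' k x j.
    move=> j Hj; rewrite /upd; case: eqP => // /eqP jk.
    by apply: H; split => // E; rewrite E eqxx in jk.
  by split=> -[x Hx]; exists x;
    [rewrite -(IH _ _ (upd_ext x)) | rewrite (IH _ _ (upd_ext x))].
Qed.

Definition Fexists (vs : seq nat) (p : formula L) := foldr (@Fex L) p vs.

Definition override (rho g : nat -> M) (vs : seq nat) : nat -> M :=
  fun v => if v \in vs then g v else rho v.

Lemma sat_Fexists (rho : nat -> M) vs p :
  sat rho (Fexists vs p) <-> exists g, sat (override rho g vs) p.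
Proof.
elim: vs rho => [|v vs IH] rho /=; first by split=> [H|[g]]; [exists rho|].
split=> [[x /IH [g Hg]] | [g Hg]].
  exists (fun w => if w \in vs then g w else x).
  suff <- : override (upd rho v x) g vs =
     override rho (fun w => if w \in vs then g w else x) (v :: vs) by [].
  apply: funext => w; rewrite /override /upd in_cons.
  by case: (boolP (w \in vs)) => _; rewrite ?orbT ?orbF //; case: eqP.
exists (g v); apply/IH; exists g.
suff -> : override (upd rho v (g v)) g vs = override rho g (v :: vs) by [].
apply: funext => w; rewrite /override /upd in_cons.
by case: (boolP (w \in vs)) => _; rewrite ?orbT ?orbF //; case: eqP => // ->.
Qed.

Definition Ftrue : formula L := Feq (Tvar 0) (Tvar 0).

Definition Fbigand (ps : seq (formula L)) := foldr (@Fand L) Ftrue ps.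

Lemma sat_Fbigand (T : eqType) (rho : nat -> M) (l : seq T) (f : T -> formula L) :
  sat rho (Fbigand (map f l)) <-> forall x, x \in l -> sat rho (f x).
Proof.
elim: l => [|y l IH] //=; rewrite IH; split=> [[fy fl] x|H].
  by rewrite in_cons => /predU1P[->|]; [|apply: fl].
by split=> [|x xl]; apply: H; rewrite in_cons ?eqxx ?xl ?orbT.
Qed.

Definition Flit (b : bool) (p : formula L) := if b then p else Fnot p.

Lemma sat_Flit (rho : nat -> M) b p : sat rho (Flit b p) <-> (sat rho p <-> b).
Proof. by case: b => /=; split=> // H; [apply/H | move=> /H]. Qed.

End Syntax.

Section CopyLayout.
Variables (L : signature) (U : structure L) (n m : nat) (phi : formula L).
Hypothesis phi_in : formula_in n m phi.
Local Open Scope nat_scope.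

(* Copies phi(x_i, y) of phi live on disjoint even variables: the
   coordinates of x_i at (n + m + i * n + v).*2, except for one distinguished
   copy t, placed on the first variables v.*2 so that saturation can realise
   it; y at (n + w).*2; the bound variables of phi are sent to odd slots. *)
Definition xslot (t : option nat) (i v : nat) : nat :=
  if t == Some i then v.*2 else (n + m + i * n + v).*2.

Definition yslot (w : nat) : nat := (n + w).*2.

Definition copy_ren (t : option nat) (i v : nat) : nat :=
  if v < n then xslot t i v else if v < n + m then v.*2 else v.*2.+1.

Lemma copy_ren_inj t i : injective (copy_ren t i).
Proof.
move=> a b; rewrite /copy_ren /xslot; case: (t == Some i); do !case: ifP => ?; lia.
Qed.

Definition slot_env (t : option nat) (e : nat -> 'I_n -> U) (b : 'I_m -> U)
    (w : nat) : U :=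
  let h := w./2 in
  if odd w then dom_pt U
  else if h < n then
    if t is Some t0 then oapp (e t0) (dom_pt U) (insub h) else dom_pt U
  else if h < n + m then oapp b (dom_pt U) (insub (h - n))
  else oapp (e ((h - (n + m)) %/ n)) (dom_pt U) (insub ((h - (n + m)) %% n)).

Lemma slot_env_x t e b i (v : 'I_n) : slot_env t e b (xslot t i v) = e i v.
Proof.
rewrite /slot_env /xslot; case: eqP => [->|_] /=.
  by rewrite odd_double doubleK ltn_ord valK.
rewrite odd_double doubleK.
have n_gt0 : 0 < n by apply: leq_ltn_trans (ltn_ord v).
rewrite !ifF; try lia.
have -> : n + m + i * n + v - (n + m) = i * n + v by lia.
by rewrite modnMDl divnMDl // modn_small ?divn_small ?addn0 ?valK.
Qed.

Lemma slot_env_y t e b (w : 'I_m) : slot_env t e b (yslot w) = b w.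
Proof.
rewrite /slot_env /yslot odd_double doubleK ifF; last by lia.
by rewrite ltn_add2l ltn_ord addKn valK.
Qed.

Lemma sat_copy t i (rho : nat -> U) :
  sat rho (frename (copy_ren t i) phi) <->
  satxy phi (fun v : 'I_n => rho (xslot t i v)) (fun w : 'I_m => rho (yslot w)).
Proof.
rewrite sat_rename; last exact: copy_ren_inj.
apply: sat_ext => k /phi_in k_lt; rewrite /env2 /= /copy_ren.
case: insubP => [v _ <-|]; first by rewrite ltn_ord.
rewrite -ltnNge => k_ge; rewrite ifF; last by lia.
case: insubP => [w _ wk|]; last by lia.
by rewrite k_lt /yslot wk subnKC.
Qed.

End CopyLayout.

(** * Compactness: from finite to infinite shattering *)

Lemma dependent_choice (T : Type) (P : T -> Prop) (R : T -> T -> Prop) (x0 : T) :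
  P x0 -> (forall x, P x -> exists2 y, P y & R x y) ->
  exists f : nat -> T, f 0%N = x0 /\ forall k, P (f k) /\ R (f k) (f k.+1).
Proof.
move=> Px0 step.
have /boolp.choice [g Hg] : forall x, exists y, P x -> P y /\ R x y.
  move=> x.
  by have [/step [y Py Rxy]|nPx] := boolp.pselect (P x); [exists y | exists x].
pose f := fix f k := if k is k'.+1 then g (f k') else x0.
have Pf k : P (f k) by elim: k => //= k /Hg[].
by exists f; split=> // k; split=> //; apply: (Hg _ (Pf k)).2.
Qed.

Section Saturation.
Variables (L : signature) (U : structure L) (n m : nat) (phi : formula L).
Hypothesis phi_in : formula_in n m phi.
Hypothesis U_sat : aleph1_saturated U.
Local Open Scope nat_scope.

Definition shatters (K : nat) (e : nat -> 'I_n -> U) :=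
  forall S : nat -> bool, exists b : 'I_m -> U,
    forall i, i < K -> (satxy phi (e i) b <-> S i).

Lemma shatters_ext K e e' : (forall i, i < K -> e i = e' i) ->
  shatters K e' -> shatters K e.
Proof.
by move=> ee' sh S; have [b Hb] := sh S; exists b => i iK; rewrite ee' //; apply: Hb.
Qed.

Lemma shatters_le K K' e : K <= K' -> shatters K' e -> shatters K e.
Proof.
by move=> KK' sh S; have [b Hb] := sh S; exists b => i iK; apply/Hb/(leq_trans iK).
Qed.

Definition splice (k : nat) (c rho : nat -> U) (i : nat) : U :=
  if i < k then c i else rho i.

Let pt : 'I_m -> U := fun _ => dom_pt U.
Let e_pt : nat -> 'I_n -> U := fun _ _ => dom_pt U.

Lemma realize_pattern (e : nat -> 'I_n -> U) (S : nat -> bool) :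
  (forall N, exists b : 'I_m -> U, forall k, k < N -> (satxy phi (e k) b <-> S k)) ->
  exists b : 'I_m -> U, forall k, satxy phi (e k) b <-> S k.
Proof.
move=> fin_sat.
pose rho := slot_env None e pt.
have copyE c j :
    sat (splice (n + m).*2 c rho) (Flit (S j) (frename (copy_ren n m None j) phi)) <->
    (satxy phi (e j) (fun w : 'I_m => c (yslot n w)) <-> S j).
  rewrite sat_Flit sat_copy //.
  have -> : (fun v : 'I_n => splice (n + m).*2 c rho (xslot n m None j v)) = e j.
    apply: funext => v; rewrite /splice ifF; first exact: slot_env_x.
    by rewrite /xslot /=; lia.
  have -> : (fun w : 'I_m => splice (n + m).*2 c rho (yslot n w)) = c \o yslot n.
    by apply: funext => w; rewrite /splice ifT // /yslot; have := ltn_ord w; lia.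
  by [].
have [N|c Hc] := U_sat (k := (n + m).*2) (rho := rho)
    (Sigma := fun j => Flit (S j) (frename (copy_ren n m None j) phi)).
  have [b Hb] := fin_sat N; exists (slot_env None e b) => j jN; apply/copyE.
  have -> : (fun w : 'I_m => slot_env None e b (yslot n w)) = b.
    by apply: funext => w; rewrite slot_env_y.
  exact: Hb.
by exists (c \o yslot n) => k; apply/copyE/Hc.
Qed.

Definition yslots := map (yslot n) (iota 0 m).

Definition later_xslots (t K : nat) :=
  [seq xslot n m (Some t) i v | i <- iota t.+1 (K - t.+1), v <- iota 0 n].

Definition Fpattern (t K : nat) (f : {ffun 'I_K -> bool}) :=
  Fexists yslots
    (Fbigand [seq Flit (f i) (frename (copy_ren n m (Some t) i) phi) | i <- enum 'I_K]).

(* With x_t on the first variables and x_i (i < t) as parameters: there are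
   x_(t+1), ..., x_(K-1) such that x_0, ..., x_(K-1) is shattered. *)
Definition Fshattered (t K : nat) :=
  Fexists (later_xslots t K)
    (Fbigand [seq Fpattern t f | f <- enum {ffun 'I_K -> bool}]).

Lemma xslot_notin_yslots t i (v : 'I_n) : xslot n m t i v \notin yslots.
Proof.
apply/mapP => -[w]; rewrite mem_iota /yslot /xslot => /andP[_ wm].
by case: eqP => _; have := ltn_ord v; lia.
Qed.

Lemma yslot_in_yslots (w : 'I_m) : yslot n w \in yslots.
Proof. by apply: map_f; rewrite mem_iota /=. Qed.

Lemma mem_later_xslots t K i (v : 'I_n) :
  (xslot n m (Some t) i v \in later_xslots t K) = (t < i < K).
Proof.
apply/allpairsP/idP => [[[i' v'] /= []] | /andP[ti iK]]; last first.
  by exists (i, val v); rewrite !mem_iota /=; split=> //; apply/andP; split; lia.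
rewrite !mem_iota /xslot /= => /andP[ti' i'K] v'n.
have n_gt0 : 0 < n by lia.
have -> : (Some t == Some i') = false by apply/eqP => -[E]; lia.
case: eqP => [[<-]|_] /(can_inj doubleK) E; first by have := ltn_ord v; lia.
have {}E : i' * n + v' = i * n + v by lia.
have := congr1 (divn^~ n) E; rewrite /= !divnMDl // !divn_small //; lia.
Qed.

Lemma sat_Fpattern t K (f : {ffun 'I_K -> bool}) (rho : nat -> U) :
  sat rho (Fpattern t f) <->
  exists b : 'I_m -> U, forall i : 'I_K,
    satxy phi (fun v : 'I_n => rho (xslot n m (Some t) i v)) b <-> f i.
Proof.
have xE g i : (fun v : 'I_n => override rho g yslots (xslot n m (Some t) i v)) =
              (fun v : 'I_n => rho (xslot n m (Some t) i v)).
  by apply: funext => v; rewrite /override ifN // xslot_notin_yslots.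
rewrite /Fpattern sat_Fexists; split=> [[g /sat_Fbigand sat_g] | [b Hb]].
  exists (g \o yslot n) => i.
  have /sat_g : i \in enum 'I_K by rewrite mem_enum.
  rewrite sat_Flit sat_copy // xE.
  suff -> : (fun w : 'I_m => override rho g yslots (yslot n w)) = g \o yslot n by [].
  by apply: funext => w; rewrite /override yslot_in_yslots.
exists (slot_env None e_pt b); apply/sat_Fbigand => i _.
rewrite sat_Flit sat_copy // xE.
suff -> : (fun w : 'I_m => override rho (slot_env None e_pt b) yslots (yslot n w)) = b.
  exact: Hb.
by apply: funext => w; rewrite /override yslot_in_yslots slot_env_y.
Qed.

Lemma sat_Fshattered t K (rho : nat -> U) :
  sat rho (Fshattered t K) <->
  exists g, shatters K
    (fun i (v : 'I_n) => override rho g (later_xslots t K) (xslot n m (Some t) i v)).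
Proof.
rewrite /Fshattered sat_Fexists; split=> [[g /sat_Fbigand sat_g] | [g sh_g]].
  exists g => S.
  have /sat_g /sat_Fpattern [b Hb] :
      [ffun i : 'I_K => S i] \in enum {ffun 'I_K -> bool} by rewrite mem_enum.
  by exists b => i iK; have := Hb (Ordinal iK); rewrite ffunE.
exists g; apply/sat_Fbigand => f _; apply/sat_Fpattern.
have [b Hb] := sh_g (fun i => if insub i is Some i' then f i' else false).
by exists b => i; rewrite Hb // valK.
Qed.

Definition extendable (e : nat -> 'I_n -> U) (t : nat) :=
  forall K, exists2 e', (forall i, i < t -> e' i = e i) & shatters K e'.

Lemma extendable_step e t : extendable e t ->
  exists x, extendable (fun i => if i == t then x else e i) t.+1.
Proof.
move=> ext.
pose rho := slot_env None e pt.
have spliceE c g K i (v : 'I_n) :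
    override (splice n.*2 c rho) g (later_xslots t K) (xslot n m (Some t) i v) =
    if t < i < K then g (xslot n m (Some t) i v)
    else if i == t then c v.*2 else e i v.
  rewrite /override mem_later_xslots; case: ifP => // _; rewrite /splice /xslot.
  case: eqP => [[->]|ti]; first by rewrite eqxx ltn_double ltn_ord.
  rewrite ifF; last by lia.
  rewrite ifF; last by apply/eqP => E; apply: ti; rewrite E.
  exact: (slot_env_x None e pt i v).
have [N|c Hc] := U_sat (k := n.*2) (rho := rho) (Sigma := Fshattered t).
  have [e' e'e sh'] := ext N.
  exists (slot_env (Some t) e' pt) => K KN; apply/sat_Fshattered.
  exists (slot_env (Some t) e' pt); apply: shatters_ext (shatters_le (ltnW KN) sh').
  move=> i iK; apply: funext => v; rewrite spliceE iK andbT.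
  case: ifP => ti; first by rewrite slot_env_x.
  case: eqP => [->|ne]; last by rewrite e'e //; lia.
  by have := slot_env_x (Some t) e' pt t v; rewrite /xslot eqxx.
exists (fun v : 'I_n => c v.*2) => K.
have /sat_Fshattered [g sh_g] := Hc K.
exists (fun i (v : 'I_n) =>
  override (splice n.*2 c rho) g (later_xslots t K) (xslot n m (Some t) i v)) => //.
move=> i it; apply: funext => v; rewrite spliceE ltnNge -ltnS it /=.
by case: eqP.
Qed.

Lemma shatters_sequence : (forall K, exists e, shatters K e) ->
  exists e : nat -> 'I_n -> U, forall K, shatters K e.
Proof.
move=> fin_sh.
pose P (p : nat * (nat -> 'I_n -> U)) := extendable p.2 p.1.
pose R (p p' : nat * (nat -> 'I_n -> U)) :=
  p'.1 = p.1.+1 /\ forall i, i < p.1 -> p'.2 i = p.2 i.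
have [||f [f0 Pf]] := @dependent_choice _ P R (0, e_pt).
- by move=> K; have [e sh] := fin_sh K; exists e.
- move=> [t e] /extendable_step [x ext].
  exists (t.+1, fun i => if i == t then x else e i) => //.
  by split=> //= i it; rewrite ifN_eq // ltn_eqF.
have f1 k : (f k).1 = k by elim: k => [|k IH]; rewrite ?f0 // (Pf k).2.1 IH.
have f2 k k' i : i < k -> k <= k' -> (f k').2 i = (f k).2 i.
  move=> ik; elim: k' => [|k' IH]; first by rewrite leqn0 => /eqP->.
  rewrite leq_eqVlt => /orP[/eqP->//|]; rewrite ltnS => kk'.
  by rewrite (Pf k').2.2 ?IH // f1; apply: leq_trans kk'.
exists (fun i => (f i.+1).2 i) => K.
have [e' e'e sh'] := (Pf K).1 K; rewrite f1 in e'e.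
by apply: shatters_ext sh' => i iK; rewrite e'e // (f2 i.+1 K).
Qed.

Lemma shatters_infinite : (forall K, exists e, shatters K e) ->
  exists e : nat -> 'I_n -> U, forall S : nat -> bool, exists b : 'I_m -> U,
    forall i, satxy phi (e i) b <-> S i.
Proof.
move=> /shatters_sequence [e sh]; exists e => S; apply: realize_pattern => N.
by have [b Hb] := sh N S; exists b.
Qed.

End Saturation.

(** * Ramsey's theorem for subsequences *)

Section Ramsey.
Local Open Scope nat_scope.

Lemma infinite_pigeonhole (c : nat -> bool) :
  exists (b : bool) (p : nat -> nat), {homo p : i j / i < j} /\ forall i, c (p i) = b.
Proof.
have [[N cN]|] := boolp.pselect (exists N, forall i, N <= i -> c i = false).
  exists false, (addn N); split=> [i j|i]; first by rewrite ltn_add2l.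
  by rewrite cN ?leq_addr.
move=> /boolp.forallNP c_inf.
have c_after N : exists2 i, c i & N < i.
  apply: boolp.contrapT => none; apply: (c_inf N.+1) => i Ni.
  by apply/negbTE/negP => ci; apply: none; exists i.
have [i0 ci0 _] := c_after 0.
have [p [_ Hp]] :=
  @dependent_choice _ c (fun i j => i < j) _ ci0 (fun i _ => c_after i).
exists true, p; split=> [|i]; last by case: (Hp i).
by apply: homo_ltn ltn_trans _ => i; case: (Hp i).
Qed.

Definition depends_on_prefix (k : nat) (C : (nat -> nat) -> Prop) :=
  forall f g, (forall r, r < k -> f r = g r) -> C f -> C g.

Definition scons (x : nat) (f : nat -> nat) (r : nat) : nat :=
  if r is r'.+1 then f r' else x.

Definition homogeneous (C : (nat -> nat) -> Prop) (s : nat -> nat) :=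
  forall u, {homo u : i j / i < j} -> (C (s \o u) <-> C s).

Lemma depends_on_prefix_ext k C f g : depends_on_prefix k C -> f =1 g -> C f <-> C g.
Proof. by move=> C_pre fg; split; apply: C_pre => r _. Qed.

Section RamseyStep.
Variables (k : nat) (C : (nat -> nat) -> Prop).
Hypothesis C_pre : depends_on_prefix k.+1 C.
Hypothesis ramsey_k : forall C', depends_on_prefix k C' ->
  exists2 s, {homo s : i j / i < j} & homogeneous C' s.

Lemma ramsey_head (h : nat -> nat) : exists2 s, {homo s : i j / i < j} &
  homogeneous (fun f => C (scons (h 0) f)) (h \o succn \o s).
Proof.
apply: ramsey_k => f g fg; apply: C_pre => -[|r] //= rk.
by congr h; rewrite fg.
Qed.

Lemma ramsey_succ : exists2 s, {homo s : i j / i < j} & homogeneous C s.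
Proof.
have /boolp.choice [sh sh_spec] := fun h => (boolp.exists2P _ _).1 (ramsey_head h).
pose H i := iter i (fun h => h \o succn \o sh h) id.
pose x i := H i 0.
have H_incr i : {homo H i : p q / p < q}.
  by elim: i => //= i IH p q pq; apply/IH/(sh_spec _).1.
have H_sub i j : i < j -> exists2 w, {homo w : p q / p < q} & H j =1 H i.+1 \o w.
  elim: j => // j IH; rewrite ltnS leq_eqVlt => /predU1P[-> | /IH [w w_incr Hw]].
    by exists id.
  exists (w \o succn \o sh (H j)) => [p q pq|r]; last by rewrite /= Hw.
  by apply/w_incr/(sh_spec _).1.
have x_incr : {homo x : p q / p < q}.
  by apply: homo_ltn ltn_trans _ => i; apply: H_incr.
(* H i.+1 refines H i past its head x i, and along H i.+1 the truth of
   C (scons (x i) _) no longer depends on the subsequence taken. *)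
pose c i := `[< C (scons (x i) (H i.+1)) >].
have head_colour i v : {homo v : p q / p < q} -> (forall r, i < v r) ->
    C (scons (x i) (x \o v)) <-> c i.
  move=> v_incr iv.
  have /boolp.choice [w Hw] r : exists q, x (v r) = H i.+1 q.
    have [w' _ Hw'] := H_sub i (v r) (iv r); exists (w' 0).
    by rewrite /x Hw'.
  have w_incr : {homo w : p q / p < q}.
    by move=> p q pq; rewrite -(leqW_mono (leq_mono (H_incr i.+1))) -!Hw x_incr ?v_incr.
  rewrite (depends_on_prefix_ext (g := scons (x i) (H i.+1 \o w)) C_pre).
    by rewrite ((sh_spec (H i)).2 w w_incr); split=> [/asboolP|/asboolP].
  by case=> //= r; rewrite Hw.
have [b [p [p_incr cp]]] := infinite_pigeonhole c.
have C_sub u : {homo u : i j / i < j} -> C (x \o p \o u) <-> b.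
  move=> u_incr; rewrite -(cp (u 0)) -head_colour.
  - by apply: depends_on_prefix_ext C_pre _; case.
  - by move=> i j ij; apply/p_incr/u_incr.
  - by move=> r; apply/p_incr/u_incr.
exists (x \o p) => [i j ij|u u_incr]; first exact/x_incr/p_incr.
by rewrite C_sub // (C_sub id).
Qed.

End RamseyStep.

Lemma ramsey_subseq k C : depends_on_prefix k C ->
  exists2 s, {homo s : i j / i < j} & homogeneous C s.
Proof.
elim: k C => [|k IH] C C_pre; last exact: ramsey_succ C_pre IH.
by exists id => // u _; split; apply: C_pre.
Qed.

End Ramsey.

(** * Alternations and the NIP bound *)

Section Alternations.
Local Open Scope nat_scope.
Implicit Type g : nat -> bool.

Definition alternations g M := \sum_(i < M) (g i != g i.+1).

Lemma alternations0 g : alternations g 0 = 0.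
Proof. exact: big_ord0. Qed.

Lemma alternationsS g M : alternations g M.+1 = alternations g M + (g M != g M.+1).
Proof. exact: big_ord_recr. Qed.

Lemma eq_alternations g g' M : (forall i, i <= M -> g i = g' i) ->
  alternations g M = alternations g' M.
Proof.
move=> gg'; apply: eq_bigr => i _.
by rewrite !gg' // ltnW ?ltn_ord.
Qed.

Lemma alternations_tail g M :
  \sum_(1 <= i < M) (g i != g i.+1) <= alternations g M <=
  1 + \sum_(1 <= i < M) (g i != g i.+1).
Proof.
case: M => [|M]; first by rewrite alternations0 big_geq.
rewrite /alternations -(big_mkord xpredT (fun i => nat_of_bool (g i != g i.+1))).
by rewrite (@big_ltn _ _ _ 0) //= leq_addl leq_add2r leq_b1.
Qed.

Lemma alternations_parity g M : g M = g 0 (+) odd (alternations g M).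
Proof.
elim: M => [|M IH]; first by rewrite alternations0 addbF.
by rewrite alternationsS oddD addbA -IH; case: (g M); case: (g M.+1).
Qed.

Lemma alternations_mono g : {homo alternations g : M M' / M <= M'}.
Proof. by apply: homo_leq leqnn leq_trans _ => M; rewrite alternationsS leq_addr. Qed.

Lemma alternations_change g M i :
  M <= i -> g i != g M -> alternations g M < alternations g i.
Proof.
elim: i => [|i IH]; first by rewrite leqn0 => /eqP->; rewrite eqxx.
rewrite leq_eqVlt => /predU1P[->|]; first by rewrite eqxx.
rewrite ltnS alternationsS => Mi gi.
have [gi_M|] := eqVneq (g i) (g M).
  by rewrite -gi_M eq_sym in gi; rewrite gi addn1 ltnS alternations_mono.
by move=> /(IH Mi) /leq_trans; apply; rewrite leq_addr.
Qed.

Lemma bounded_alternations_eventually_const g N :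
  (forall M, alternations g M <= N) -> exists K, forall i, K <= i -> g i = g K.
Proof.
move=> bounded; apply: boolp.contrapT => never_const.
have change K : exists2 i, K <= i & g i != g K.
  apply: boolp.contrapT => nch; apply: never_const; exists K => i Ki.
  by apply/eqP/negPn/negP => ne; apply: nch; exists i.
have many c : exists M, c <= alternations g M.
  elim: c => [|c [M HM]]; first by exists 0.
  have [i Mi gi] := change M; exists i.
  exact: leq_ltn_trans HM (alternations_change Mi gi).
by have [M /leq_trans /(_ (bounded M))] := many N.+1; rewrite ltnn.
Qed.

Lemma alternating_prefix g M : exists u : nat -> nat,
  [/\ forall r, r < alternations g M -> u r < u r.+1,
      u (alternations g M) <= M &
      forall r, r <= alternations g M -> g (u r) = g 0 (+) odd r].
Proof.
elim: M => [|M [u [u_incr u_le u_alt]]].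
  exists (fun _ => 0); rewrite alternations0; split=> // r.
  by rewrite leqn0 => /eqP->; rewrite addbF.
rewrite alternationsS; set A := alternations g M in u_incr u_le u_alt *.
have [gM|gM] := eqVneq (g M) (g M.+1); rewrite ?addn0 ?addn1.
  by exists u; split=> //; apply: leq_trans u_le _.
exists (fun r => if r == A.+1 then M.+1 else u r); split.
- move=> r rA; rewrite ifF; last by apply/eqP; lia.
  have [->|rA'] := eqVneq r A; first by rewrite eqxx ltnS.
  by rewrite ifF; [apply: u_incr; lia | apply/eqP; lia].
- by rewrite eqxx.
move=> r; rewrite leq_eqVlt => /predU1P[->|rA]; last by rewrite ifF ?u_alt //; lia.
rewrite eqxx /= addbN -alternations_parity.
by move: gM; case: (g M); case: (g M.+1).
Qed.

Lemma increasing_extension (u : nat -> nat) A :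
  (forall r, r < A -> u r < u r.+1) ->
  exists2 v, {homo v : i j / i < j} & forall r, r <= A -> v r = u r.
Proof.
move=> u_incr; exists (fun r => if r <= A then u r else u A + r) => [|r ->//].
apply: homo_ltn ltn_trans _ => r; case: ifP => rA; case: ifP => rA' ; try lia.
  by apply: u_incr.
have -> : r = A by apply/anti_leq; rewrite rA leqNgt rA'.
lia.
Qed.

Lemma alternating_subseq g M : exists2 u, {homo u : i j / i < j} &
  forall r, r <= alternations g M -> g (u r) = g 0 (+) odd r.
Proof.
have [u [u_incr _ u_alt]] := alternating_prefix g M.
have [v v_incr vu] := increasing_extension u_incr.
by exists v => // r rA; rewrite vu ?u_alt.
Qed.

End Alternations.

Lemma interleaving_subseq (S : nat -> bool) : exists2 u : nat -> nat,
  {homo u : i j / (i < j)%N} & forall t, u (t.*2 + S t)%N = (3 * t).+1.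
Proof.
exists (fun r => 3 * r./2 + odd r + ~~ S r./2)%N => [|t]; last first.
  rewrite (addnC t.*2) half_bit_double oddD odd_double oddb addbF.
  by case: (S t) => /=; lia.
apply: (@homo_ltn _ _ (fun i j => i < j)%N ltn_trans) => r /=.
rewrite -[r]odd_double_half; case: (odd r); move: r./2 => h;
  rewrite /= ?add0n ?uphalf_double ?doubleK ?odd_double /=;
  by case: (S h) => /=; case: (S h.+1) => /=; lia.
Qed.

Section NIPBound.
Variables (L : signature) (U : structure L) (n m : nat) (phi : formula L).
Hypothesis phi_in : formula_in n m phi.
Hypothesis U_sat : aleph1_saturated U.
Local Open Scope nat_scope.

Lemma nip_shatters_bounded :
  NIP U n m phi -> exists K, forall e : nat -> 'I_n -> U, ~ shatters m phi K e.
Proof.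
move=> nip; apply: boolp.contrapT => unbounded; apply: nip.
have [|e sh] := shatters_infinite phi_in U_sat (m := m) (phi := phi).
  move=> K; apply: boolp.contrapT => none; apply: unbounded; exists K => e sh.
  by apply: none; exists e.
exists e => S; have [b Hb] := sh (fun i => `[< S i >]).
by exists b => i; rewrite Hb asboolE.
Qed.

Definition truth_seq (a : nat -> 'I_n -> U) (b : 'I_m -> U) (i : nat) : bool :=
  `[< satxy phi (a i) b >].

Lemma nip_bounded_alternations : NIP U n m phi -> forall a : nat -> 'I_n -> U,
  exists2 s, {homo s : i j / i < j} &
    exists N, forall b M, alternations (truth_seq (a \o s) b) M <= N.
Proof.
move=> nip a; have [K no_sh] := nip_shatters_bounded nip.
pose C f := exists b : 'I_m -> U,
  forall r, r < K.*2 -> (satxy phi (a (f r)) b <-> odd r).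
have C_pre : depends_on_prefix K.*2 C.
  by move=> f g fg [b Hb]; exists b => r rK; rewrite -fg //; apply: Hb.
have [s s_incr s_hom] := ramsey_subseq C_pre.
exists s => //; have [Cs|nCs] := boolp.pselect (C s).
  (* every subsequence alternates, so the terms of index 3t+1 are shattered *)
  exfalso; apply: (no_sh (fun t => a (s (3 * t).+1))) => S.
  have [u u_incr Hu] := interleaving_subseq S.
  have [b Hb] := (s_hom u u_incr).2 Cs.
  exists b => t tK; have := Hb (t.*2 + S t); rewrite /= Hu oddD odd_double oddb.
  by apply; case: (S t); lia.
exists K.*2 => b M; rewrite leqNgt; apply/negP => many.
set g := truth_seq (a \o s) b in many *.
have [u u_incr Hu] := alternating_subseq g M.
have [v v_incr Hv] : exists2 v, {homo v : i j / i < j} &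
    forall r, r < K.*2 -> g (v r) = odd r.
  case: (g 0) Hu => Hu.
    exists (u \o succn) => [i j ij | r rK]; first exact: u_incr.
    by rewrite /= Hu /= ?negbK //; lia.
  by exists u => // r rK; rewrite Hu //; lia.
apply/nCs/(s_hom v v_incr); exists b => r rK.
by rewrite -Hv // /g /truth_seq asboolE.
Qed.

End NIPBound.

(** * Semicontinuity on the type space *)

Section CappedSup.
Local Open Scope nat_scope.

Definition capped_sup (B : nat) (G : nat -> nat) : nat :=
  \max_(v < B.+1 | `[< exists k, v <= G k >]) v.

Lemma capped_sup_le B G : capped_sup B G <= B.
Proof. by apply/bigmax_leqP => v _; rewrite -ltnS. Qed.

Lemma capped_sup_attained B G : exists k, capped_sup B G <= G k.
Proof.
apply: (big_ind (fun v => exists k, v <= G k)) => [|v w [k vk] [l wl]|v /asboolP //].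
  by exists 0.
by case: (leqP v w) => _; [exists l | exists k].
Qed.

Lemma leq_capped_sup B G v k : v <= B -> v <= G k -> v <= capped_sup B G.
Proof.
rewrite -ltnS => vB vG.
by apply: (@leq_bigmax_cond _ _ _ (Ordinal vB)); apply/asboolP; exists k.
Qed.

Lemma capped_sup_eq B G V : V <= B -> (exists k, V <= G k) ->
  (forall k, G k <= V) -> capped_sup B G = V.
Proof.
move=> VB [k Vk] GV; apply/anti_leq; rewrite (leq_capped_sup VB Vk) andbT.
by have [k' /leq_trans] := capped_sup_attained B G; apply.
Qed.

End CappedSup.

Definition prefix_determined (F : cantor_space -> nat) :=
  exists K, forall x y : cantor_space, (forall i, (i < K)%N -> x i = y i) -> F x = F y.

Lemma nbhs_cantor_prefix (x : cantor_space) K :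
  nbhs x [set y : cantor_space | forall i, (i < K)%N -> y i = x i].
Proof.
elim: K => [|K IH]; first exact: filterS filterT.
have coord_K : nbhs x [set y : cantor_space | y K = x K].
  apply: (@proj_continuous nat (fun _ => bool) K x [set x K]).
  exact/principal_filterP.
apply: filterS (filterI IH coord_K) => y [yx yxK] i.
by rewrite ltnS leq_eqVlt => /predU1P[->|/yx].
Qed.

Lemma nbhs_stone_space (A : set cantor_space) (x : cantor_space)
    (V : set cantor_space) :
  nbhs x V -> @nbhs _ (stone_space A) x V.
Proof.
move=> xV; case: (@nbhs_subspaceP _ A x) => Ax; first by apply: filterS xV => y Vy _.
by move=> y ->; apply: nbhs_singleton xV.
Qed.

Lemma lsc_capped_sup (R : realType) (A : set cantor_space) B
    (G : cantor_space -> nat -> nat) : (forall k, prefix_determined (G^~ k)) ->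
  @lsc (stone_space A) R (fun x => (capped_sup B (G x))%:R).
Proof.
move=> G_pre x a ax; have [k Gk] := capped_sup_attained B (G x).
have [K GK] := G_pre k.
exists [set y : cantor_space | forall i, (i < K)%N -> y i = x i].
  exact/nbhs_stone_space/nbhs_cantor_prefix.
move=> y /= yx; apply: lt_le_trans ax _; rewrite lee_fin ler_nat.
apply: (leq_capped_sup (k := k) (capped_sup_le _ _)).
by rewrite -(GK x) // => i /yx.
Qed.

Section AscentsDescents.
Local Open Scope nat_scope.
Implicit Type q : nat -> bool.

Definition ascents q k := \sum_(i < k) (~~ q i && q i.+1).
Definition descents q k := \sum_(i < k) (q i && ~~ q i.+1).

Lemma ascents_descents q k : q k + descents q k = q 0 + ascents q k.
Proof.
elim: k => [|k IH]; first by rewrite /descents /ascents !big_ord0.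
rewrite /descents /ascents !big_ord_recr /= -/(descents q k) -/(ascents q k).
by move: IH; case: (q k); case: (q k.+1) => /=; lia.
Qed.

Lemma ascents_le q k : ascents q k <= alternations q k.
Proof. by apply: leq_sum => i _; case: (q i); case: (q i.+1). Qed.

Lemma descents_le q k : descents q k <= alternations q k.
Proof. by apply: leq_sum => i _; case: (q i); case: (q i.+1). Qed.

Lemma sum_ord_le_stable (h : nat -> nat) K k : (forall i, K <= i -> h i = 0) ->
  \sum_(i < k) h i <= \sum_(i < K) h i.
Proof.
move=> h0; rewrite -!(big_mkord xpredT); case: (leqP k K) => kK.
  by rewrite (@big_cat_nat _ _ _ k 0 K) // leq_addr.
rewrite (@big_cat_nat _ _ _ K 0 k) ?(ltnW kK) //= [X in _ + X]big_nat_cond.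
rewrite [X in _ + X]big1 ?addn0 //.
by move=> i /andP[/andP[Ki _] _]; apply: h0.
Qed.

Lemma ascents_stable q K k : (forall i, K <= i -> q i = q K) ->
  ascents q k <= ascents q K.
Proof.
move=> q_stable; apply: (@sum_ord_le_stable (fun i => ~~ q i && q i.+1)) => i Ki.
by rewrite !q_stable ?andNb // (leq_trans Ki).
Qed.

Lemma descents_stable q K k : (forall i, K <= i -> q i = q K) ->
  descents q k <= descents q K.
Proof.
move=> q_stable; apply: (@sum_ord_le_stable (fun i => q i && ~~ q i.+1)) => i Ki.
by rewrite !q_stable ?andbN // (leq_trans Ki).
Qed.

Lemma prefix_determined_transitions (h : bool -> bool -> bool) k :
  prefix_determined (fun x => \sum_(i < k) h (x i) (x i.+1)).
Proof.
exists k.+1 => x y xy; apply: eq_bigr => i _.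
by rewrite !xy //; have := ltn_ord i; lia.
Qed.

Lemma prefix_determined_head_add F :
  prefix_determined F -> prefix_determined (fun x => x 0 + F x).
Proof.
move=> [K F_pre]; exists K.+1 => x y xy.
by rewrite xy ?(F_pre x y) // => i iK; apply/xy/ltnW.
Qed.

End AscentsDescents.

Section BoundedAlternationLimit.
Variables (R : realType) (A : set cantor_space) (N : nat).
Hypothesis A_bounded : forall q, A q -> forall M, (alternations q M <= N)%N.

Let F_asc (q : cantor_space) : R :=
  (capped_sup N.+1 (fun k => q 0%N + ascents q k)%N)%:R.
Let F_desc (q : cantor_space) : R := (capped_sup N (descents q))%:R.

Lemma bsc_capped_sup B (G : cantor_space -> nat -> nat) :
  (forall k, prefix_determined (G^~ k)) ->
  @bounded_semicontinuous (stone_space A) R (fun x => (capped_sup B (G x))%:R).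
Proof.
move=> G_pre; split; last by left; apply: lsc_capped_sup.
by exists B%:R => x; rewrite normr_nat ler_nat capped_sup_le.
Qed.

Lemma stable_limit_ascents_descents q K : (forall i, (K <= i)%N -> q i = q K) ->
  A q -> (fun i => (q i)%:R) @ \oo --> F_asc q - F_desc q.
Proof.
move=> q_stable Aq.
have -> : F_asc q = (q 0%N + ascents q K)%N%:R.
  congr (_%:R); apply: capped_sup_eq; last 2 first.
  - by exists K.
  - by move=> k; rewrite leq_add2l ascents_stable.
  by have := leq_trans (ascents_le q K) (A_bounded Aq K); case: (q 0%N); lia.
have -> : F_desc q = (descents q K)%:R.
  congr (_%:R); apply: capped_sup_eq; last 2 first.
  - by exists K.
  - by move=> k; rewrite descents_stable.
  exact: leq_trans (descents_le q K) (A_bounded Aq K).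
apply: cvg_near_cst; near=> i.
by rewrite -ascents_descents natrD addrK q_stable //; near: i; exists K.
Unshelve. all: by end_near.
Qed.

Lemma bounded_alternations_DBSC_limit : exists f : stone_space A -> R,
  (forall q, A q -> (fun i => (q i)%:R) @ \oo --> f q) /\ DBSC f.
Proof.
exists (fun q => F_asc q - F_desc q); split.
  move=> q Aq.
  have [K q_stable] := bounded_alternations_eventually_const (A_bounded Aq).
  exact: stable_limit_ascents_descents q_stable Aq.
exists F_asc, F_desc; split; [|split=> //]; apply: bsc_capped_sup => k.
  apply: prefix_determined_head_add.
  exact: (prefix_determined_transitions (fun a b => ~~ a && b)).
exact: (prefix_determined_transitions (fun a b => a && ~~ b)).
Qed.

End BoundedAlternationLimit.

Section Proposition.
Variables (L : signature) (U : structure L) (n m : nat) (phi : formula L).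
Variable R : realType.
Implicit Types (a : nat -> 'I_n -> U) (b : 'I_m -> U).

Definition eventually_constant_subseq (a : nat -> 'I_n -> U) :=
  exists j : nat -> nat, {homo j : p q / (p < q)%N} /\
    forall b : 'I_m -> U, exists N : nat, forall i : nat, (N <= i)%N ->
      (satxy phi (a (j i)) b <-> satxy phi (a (j N)) b).

Definition variation (a : nat -> 'I_n -> U) (b : 'I_m -> U) : \bar R :=
  \sum_(1 <= i <oo) (`|tv phi R (a i) b - tv phi R (a i.+1) b|)%:E.

Definition bounded_variation_subseq (a : nat -> 'I_n -> U) :=
  exists j : nat -> nat, {homo j : p q / (p < q)%N} /\
    exists N : nat, forall b : 'I_m -> U, (variation (a \o j) b <= N%:R%:E)%E.

Definition DBSC_limit_subseq (a : nat -> 'I_n -> U) :=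
  exists j : nat -> nat, {homo j : p q / (p < q)%N} /\
    exists f : stone_space (phi_types m phi (fun i => a (j i))) -> R,
      (forall q : nat -> bool, phi_types m phi (fun i => a (j i)) q ->
         (fun i : nat => ((q i)%:R : R)) @ \oo --> f q) /\
      DBSC f.

Lemma tv_dist (a a' : 'I_n -> U) (b : 'I_m -> U) :
  `|tv phi R a b - tv phi R a' b| =
  (`[< satxy phi a b >] != `[< satxy phi a' b >] : nat)%:R.
Proof.
rewrite /tv; case: `[< _ >]; case: `[< _ >] => /=;
  by rewrite ?subrr ?normr0 ?subr0 ?sub0r ?normrN ?normr1.
Qed.

Lemma variation_partial_sum a b k :
  (\sum_(1 <= i < k) (`|tv phi R (a i) b - tv phi R (a i.+1) b|)%:E)%E =
  ((\sum_(1 <= i < k) (truth_seq phi a b i != truth_seq phi a b i.+1))%N%:R)%:E.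
Proof.
by rewrite sumEFin natr_sum; congr (_%:E); apply: eq_bigr => i _; apply: tv_dist.
Qed.

Lemma variation_le a b N :
  (forall M, (alternations (truth_seq phi a b) M <= N)%N) ->
  (variation a b <= N%:R%:E)%E.
Proof.
move=> bounded; apply: lime_le.
  by apply: is_cvg_nneseries => *; rewrite lee_fin normr_ge0.
apply: nearW => k; rewrite variation_partial_sum lee_fin ler_nat.
exact: leq_trans (andP (alternations_tail _ k)).1 (bounded k).
Qed.

Lemma alternations_le_variation a b N : (variation a b <= N%:R%:E)%E ->
  forall M, (alternations (truth_seq phi a b) M <= N.+1)%N.
Proof.
move=> bounded M; apply: leq_trans (andP (alternations_tail _ M)).2 _.
rewrite add1n ltnS -(ler_nat R) -lee_fin -variation_partial_sum.
apply: le_trans bounded; apply: nneseries_lim_ge => *.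
by rewrite lee_fin normr_ge0.
Qed.

Lemma shattered_alternating (a : nat -> 'I_n -> U) (j : nat -> nat) :
  (forall S : set nat, exists b : 'I_m -> U, forall i, satxy phi (a i) b <-> S i) ->
  {homo j : p q / (p < q)%N} ->
  exists b : 'I_m -> U, forall r, satxy phi (a (j r)) b <-> odd r.
Proof.
move=> shattered j_incr.
have [b Hb] := shattered [set i | exists2 r, i = j r & odd r].
exists b => r; rewrite Hb; split=> [[r' /(incn_inj (leq_mono j_incr)) ->] // | r_odd].
by exists r.
Qed.

Lemma eventually_constant_nip :
  (forall a, eventually_constant_subseq a) -> NIP U n m phi.
Proof.
move=> ev_const [a shattered]; have [j [j_incr Hj]] := ev_const a.
have [b Hb] := shattered_alternating shattered j_incr.
have [N HN] := Hj b; have := HN N.+1 (leqnSn N); rewrite !Hb /=.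
by case: (odd N) => -[]; auto.
Qed.

Lemma odd_not_cvg (l : R) : ~ (fun i : nat => ((odd i)%:R : R)) @ \oo --> l.
Proof.
move=> /cvgr_dist_lt /(_ (1 / 2)) [|K _ HK]; first by rewrite divr_gt0.
have := HK K (leqnn K); have := HK K.+1 (leqnSn K); rewrite /= !ltr_norml.
by case: (odd K) => /= /andP[? ?] /andP[? ?]; lra.
Qed.

Lemma DBSC_limit_nip : (forall a, DBSC_limit_subseq a) -> NIP U n m phi.
Proof.
move=> dbsc [a shattered]; have [j [j_incr [f [f_lim _]]]] := dbsc a.
have [b Hb] := shattered_alternating shattered j_incr.
by apply: (odd_not_cvg (f_lim odd _)) => N; exists b => k _; apply: Hb.
Qed.

Lemma bounded_variation_eventually_constant a :
  bounded_variation_subseq a -> eventually_constant_subseq a.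
Proof.
move=> [j [j_incr [N HN]]]; exists j; split=> // b.
have [K HK] :=
  bounded_alternations_eventually_const (alternations_le_variation (HN b)).
exists K => i Ki; have /= := HK i Ki.
by rewrite /truth_seq -[X in X <-> _]asboolE -[X in _ <-> X]asboolE => ->.
Qed.

Section NIP.
Hypothesis phi_in : formula_in n m phi.
Hypothesis U_sat : aleph1_saturated U.

Lemma nip_bounded_variation : NIP U n m phi -> forall a, bounded_variation_subseq a.
Proof.
move=> nip a; have [s s_incr [N HN]] := nip_bounded_alternations phi_in U_sat nip a.
by exists s; split=> //; exists N => b; apply: variation_le.
Qed.

Lemma nip_DBSC_limit : NIP U n m phi -> forall a, DBSC_limit_subseq a.
Proof.
move=> nip a; have [s s_incr [N HN]] := nip_bounded_alternations phi_in U_sat nip a.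
exists s; split=> //; apply: bounded_alternations_DBSC_limit => q q_type M.
have [b Hb] := q_type M.+1.
rewrite (@eq_alternations _ (truth_seq phi (a \o s) b)) ?HN // => i iM.
by apply/esym/asbool_equiv_eqP; [exact: idP | apply: Hb].
Qed.

End NIP.
End Proposition.

Theorem proposition2p13 (L : signature) (T : theory L) (U : structure L)
    (n m : nat) (phi : formula L) (R : realType) :
  is_theory T -> complete_theory T ->
  is_model U T -> aleph1_saturated U ->
  formula_in n m phi ->
  [<-> NIP U n m phi;
    forall a : nat -> ('I_n -> U),
      exists j : nat -> nat, {homo j : p q / (p < q)%N} /\
        forall b : 'I_m -> U, exists N : nat, forall i : nat, (N <= i)%N ->
          (satxy phi (a (j i)) b <-> satxy phi (a (j N)) b);
    forall a : nat -> ('I_n -> U),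
      exists j : nat -> nat, {homo j : p q / (p < q)%N} /\
        exists N : nat, forall b : 'I_m -> U,
          (\sum_(1 <= i <oo)
             ((`| tv phi R (a (j i)) b - tv phi R (a (j i.+1)) b |)%R)%:E
           <= (N%:R)%:E)%E;
    forall a : nat -> ('I_n -> U),
      exists j : nat -> nat, {homo j : p q / (p < q)%N} /\
        exists f : stone_space (phi_types m phi (fun i => a (j i))) -> R,
          (forall q : nat -> bool, phi_types m phi (fun i => a (j i)) q ->
             (fun i : nat => ((q i)%:R : R)) @ \oo --> f q) /\
          DBSC f].
Proof.
move=> _ _ _ U_sat phi_in.
have nip_var := nip_bounded_variation R phi_in U_sat.
have nip_lim := nip_DBSC_limit R phi_in U_sat.
have var_const := @bounded_variation_eventually_constant L U n m phi R.
tfae.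
- by move=> /nip_var var a; apply/var_const/var.
- by move=> /eventually_constant_nip /nip_var.
- by move=> var; apply/nip_lim/eventually_constant_nip => a; apply/var_const/var.
- exact: DBSC_limit_nip.
Qed.
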